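(* Let $R$ be a random length-$k$ ranking generated by a PL+C model. For items $i,j\in\mathcal U$, write $i\succ_R j$ if $i$ is ranked higher than $j$ in $R$. If $\Pr(i\succ_R j\mid i,j\in R)>1/2$, then $u_i>u_j$.
   Context: PL+C model: universe $\mathcal U=\{1,\dots,n\}$, fixed ranking length $k\le n$. Each item $h$ has a utility $u_h\in\mathbb R$ and a consideration probability $p_h\in(0,1]$. A consideration set $C$ is drawn by including each item independently with probability $p_h$, conditioned on $|C|\ge k$. Given $C$, a length-$k$ ranking $r=(r_1,\dots,r_k)$ of distinct items is drawn with Plackett--Luce probability $\Pr_{PL}(r\mid C)=\prod_{t=1}^k \frac{\exp(u_{r_t})}{\sum_{h\in C\setminus\{r_1,\dots,r_{t-1}\}}\exp(u_h)}$ if all $r_t\in C$, else $0$. ''$i,j\in R$'' means both items appear in the ranking $R$. *)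

From HB Require Import structures.
From mathcomp Require Import all_boot all_order all_algebra.
From mathcomp Require Import all_classical all_reals all_analysis.
Set Implicit Arguments. Unset Strict Implicit. Unset Printing Implicit Defensive.
Import Order.TTheory GRing.Theory Num.Theory.
Local Open Scope ring_scope.

Section PLC.
Variables (R : realType) (n k : nat) (u p : 'I_n -> R).

(* Unconditioned probability of the consideration set C
   (independent inclusion with probabilities p h). *)
Definition probC (C : {set 'I_n}) : R :=
  (\prod_(h in C) p h) * \prod_(h in ~: C) (1 - p h).

Definition Zk : R := \sum_(C : {set 'I_n} | (k <= #|C|)%N) probC C.

Definition probC_cond (C : {set 'I_n}) : R :=
  if (k <= #|C|)%N then probC C / Zk else 0.

(* A length-k ranking: r t is the item at position t (0-based).
   Rankings are required to consist of distinct items (injective r). *)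
Definition ranking := {ffun 'I_k -> 'I_n}.

Definition PL (C : {set 'I_n}) (r : ranking) : R :=
  if injectiveb r && [forall t, r t \in C] then
    \prod_(t < k)
      (expR (u (r t)) /
        \sum_(h in C :\: [set r s | s in [pred s : 'I_k | (s < t)%N]]) expR (u h))
  else 0.

Definition probR (r : ranking) : R :=
  \sum_(C : {set 'I_n}) probC_cond C * PL C r.

Definition PrEv (E : pred ranking) : R :=
  \sum_(r : ranking | injectiveb r && E r) probR r.

Definition ranked_above (i j : 'I_n) (r : ranking) : bool :=
  [exists s : 'I_k, exists t : 'I_k, [&& (s < t)%N, r s == i & r t == j]].

Definition both_in (i j : 'I_n) (r : ranking) : bool :=
  (i \in codom r) && (j \in codom r).

Definition prob_above_given_both (i j : 'I_n) : R :=
  PrEv (fun r => ranked_above i j r && both_in i j r) / PrEv (both_in i j).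

End PLC.

From HB Require Import structures.
From mathcomp Require Import all_boot all_order all_algebra.
From mathcomp Require Import all_classical all_reals all_analysis.
From mathcomp Require Import lra fingroup perm.
Set Implicit Arguments. Unset Strict Implicit.
Import Order.TTheory GRing.Theory Num.Theory.
Local Open Scope ring_scope.

(* Let r rank i above j, at positions s < s'.  Exchanging i and j in r, i.e.
   precomposing r with the transposition of s and s', keeps the product of the
   Plackett--Luce numerators.  The t-th denominator is the weight of C minus
   the weight of the items placed before stage t; when u i <= u j that removed
   weight can only grow (j now sits at position s), so every denominator
   shrinks and PL C r <= PL C (swap r) for every consideration set C.  The
   swap is an involution sending "i above j" into "j above i", two disjoint
   events inside "i, j in R"; hence Pr(i above j | i, j in R) <= 1/2. *)

Lemma big_setD_imset (I T : finType) (V : zmodType) (F : T -> V) (f : I -> T)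
    (C : {set T}) (P : {pred I}) :
  {in P &, injective f} -> f @: P \subset C ->
  \sum_(h in C :\: f @: P) F h = \sum_(h in C) F h - \sum_(s in P) F (f s).
Proof.
move=> f_inj fP_sub; rewrite (big_setID (f @: P) _ (A := C)) (finset.setIidPr fP_sub).
by rewrite big_imset //= addrC addrK.
Qed.

Lemma ratio_le_half (R : realFieldType) (a b t : R) :
  0 <= a -> a <= b -> a + b <= t -> a / t <= 1 / 2.
Proof.
move=> a_ge0 le_ab le_abt; have [-> | t_neq0] := eqVneq t 0.
  by rewrite invr0 mulr0 divr_ge0 ?ler01 ?ler0n.
rewrite ler_pdivrMr; first lra.
by rewrite lt_neqAle eq_sym t_neq0; lra.
Qed.

Lemma prefix_sum_tperm_le (R : numDomainType) (m : nat) (w : 'I_m -> R)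
    (s s' : 'I_m) (t : nat) :
  (s < s')%N -> w s <= w s' ->
  \sum_(q < m | (q < t)%N) w q <= \sum_(q < m | (q < t)%N) w (tperm s s' q).
Proof.
move=> lt_ss' le_w.
have tpermE (q : 'I_m) : q != s -> q != s' -> tperm s s' q = q.
  by move=> ? ?; apply: tpermD; rewrite eq_sym.
have [le_ts | lt_st] := leqP t s.
  rewrite le_eqVlt; apply/orP; left; apply/eqP/eq_bigr => q lt_qt.
  rewrite tpermE // neq_ltn (leq_trans lt_qt) //.
  exact: leq_trans le_ts (ltnW lt_ss').
rewrite (bigD1 s) //= [in leRHS](bigD1 s) //= tpermL.
have [lt_s't | le_ts'] := ltnP s' t; last first.
  have ne_s' (q : 'I_m) : (q < t)%N -> q != s'.
    by move=> lt_qt; rewrite neq_ltn (leq_trans lt_qt le_ts').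
  apply: lerD => //.
  by under [in leRHS]eq_bigr => q /andP[/ne_s' ne_qs' ne_qs] do rewrite tpermE //.
have s'_in : (s' < t)%N && (s' != s) by rewrite lt_s't neq_ltn lt_ss' orbT.
rewrite (bigD1 s' s'_in) [in leRHS](bigD1 s' s'_in) /= tpermR.
under [in leRHS]eq_bigr => q /andP[/andP[_ ne_qs] ne_qs'] do rewrite tpermE //.
by rewrite addrCA.
Qed.

Section SwapItems.
Variables (n k : nat) (i j : 'I_n).
Implicit Type r : ranking n k.

Definition swap_items r : ranking n k := [ffun t => tperm i j (r t)].

Lemma swap_itemsK : involutive swap_items.
Proof. by move=> r; apply/ffunP => t; rewrite !ffunE tpermK. Qed.

Lemma swap_items_inj r : injective r -> injective (swap_items r).
Proof. by move=> r_inj x y; rewrite !ffunE => /perm_inj /r_inj. Qed.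

Lemma swap_itemsE r (s s' : 'I_k) : injective r -> r s = i -> r s' = j ->
  forall t, swap_items r t = r (tperm s s' t).
Proof.
move=> r_inj ri rj t; rewrite ffunE.
case: (tpermP s s' t) => [-> | -> | ne_ts ne_ts']; first by rewrite ri tpermL.
  by rewrite rj tpermR.
apply: tpermD; [rewrite -ri | rewrite -rj]; apply/eqP => /r_inj eq_t.
- exact: ne_ts.
- exact: ne_ts'.
Qed.

Lemma ranked_above_swap r : ranked_above i j r -> ranked_above j i (swap_items r).
Proof.
case/existsP=> s /existsP[s' /and3P[lt_ss' /eqP ri /eqP rj]].
apply/existsP; exists s; apply/existsP; exists s'.
by rewrite lt_ss' !ffunE ri rj tpermL tpermR !eqxx.
Qed.

Lemma both_in_swap r : both_in i j r -> both_in i j (swap_items r).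
Proof.
case/andP=> /codomP[s ri] /codomP[s' rj]; apply/andP; split; apply/codomP.
- by exists s'; rewrite ffunE -rj tpermR.
- by exists s; rewrite ffunE -ri tpermL.
Qed.

Lemma ranked_above_asym r : injective r -> ranked_above i j r -> ~~ ranked_above j i r.
Proof.
move=> r_inj /existsP[s /existsP[s' /and3P[lt_ss' /eqP ri /eqP rj]]].
apply/existsP => -[t /existsP[t' /and3P[lt_tt' /eqP rj' /eqP ri']]].
have eq_s : s = t' by apply: r_inj; rewrite ri ri'.
have eq_s' : s' = t by apply: r_inj; rewrite rj rj'.
by move: lt_ss'; rewrite eq_s eq_s' ltnNge (ltnW lt_tt').
Qed.

End SwapItems.

Section PlackettLuce.
Variables (R : realType) (n k : nat) (u : 'I_n -> R).
Implicit Types (C : {set 'I_n}) (r : ranking n k).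

Lemma PL_ge0 C r : 0 <= PL u C r.
Proof.
rewrite /PL; case: ifP => // _; apply: prodr_ge0 => t _.
by apply: divr_ge0; [exact: expR_ge0 | apply: sumr_ge0 => h _; exact: expR_ge0].
Qed.

Lemma PL_stage_gt0 C r (t : 'I_k) : injective r -> r t \in C ->
  0 < \sum_(h in C :\: [set r s | s in [pred s : 'I_k | (s < t)%N]]) expR (u h).
Proof.
move=> r_inj rtC; rewrite (bigD1 (r t)) /=; last first.
  rewrite !inE rtC andbT; apply/imsetP => -[s lt_st /r_inj eq_ts].
  by rewrite -eq_ts inE ltnn in lt_st.
by rewrite ltr_wpDr ?expR_gt0 //; apply: sumr_ge0 => h _; exact: expR_ge0.
Qed.

Lemma PL_swap_le C r (i j : 'I_n) (s s' : 'I_k) :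
  injective r -> (s < s')%N -> r s = i -> r s' = j -> u i <= u j ->
  PL u C r <= PL u C (swap_items i j r).
Proof.
move=> r_inj lt_ss' ri rj le_u.
have swE := swap_itemsE r_inj ri rj.
have sw_inj : injective (swap_items i j r) := swap_items_inj r_inj.
rewrite {1}/PL; case: ifP => [/andP[_ /forallP rC] | _]; last exact: PL_ge0.
have swC t : swap_items i j r t \in C by rewrite swE.
rewrite /PL (introT (injectiveP _) sw_inj) (introT forallP swC) /= !big_split /=.
have -> : \prod_(t < k) expR (u (swap_items i j r t)) = \prod_(t < k) expR (u (r t)).
  under eq_bigr do rewrite swE.
  by rewrite [RHS](reindex_inj (@perm_inj _ (tperm s s'))).
apply: ler_wpM2l; first by apply: prodr_ge0 => t _; exact: expR_ge0.
apply: ler_prod => t _; rewrite invr_ge0 ltW ?PL_stage_gt0 //=.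
rewrite lef_pV2 ?posrE ?PL_stage_gt0 //.
have r_sub (r' : ranking n k) : (forall t, r' t \in C) ->
    [set r' q | q in [pred q : 'I_k | (q < t)%N]] \subset C.
  by move=> r'C; apply/fintype.subsetP => _ /imsetP[q _ ->].
rewrite !big_setD_imset ?r_sub //; try by apply: in2W.
apply: lerB => //.
under [in leRHS]eq_bigr do rewrite swE.
have le_w : expR (u (r s)) <= expR (u (r s')) by rewrite ri rj ler_expR.
exact: (@prefix_sum_tperm_le R k (fun q => expR (u (r q))) s s' t lt_ss' le_w).
Qed.

End PlackettLuce.

Section Probability.
Variables (R : realType) (n k : nat) (u p : 'I_n -> R).
Hypothesis p01 : forall h, 0 <= p h <= 1.
Implicit Types (C : {set 'I_n}) (r : ranking n k) (E : pred (ranking n k)).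

Lemma probC_ge0 C : 0 <= probC p C.
Proof.
by apply: mulr_ge0; apply: prodr_ge0 => h _; case/andP: (p01 h) => ? ?; rewrite ?subr_ge0.
Qed.

Lemma probC_cond_ge0 C : 0 <= probC_cond k p C.
Proof.
rewrite /probC_cond; case: ifP => // _.
by apply: divr_ge0; last apply: sumr_ge0 => D _; exact: probC_ge0.
Qed.

Lemma probR_ge0 r : 0 <= probR u p r.
Proof.
by apply: sumr_ge0 => C _; apply: mulr_ge0; [exact: probC_cond_ge0 | exact: PL_ge0].
Qed.

Lemma PrEv_ge0 E : 0 <= PrEv u p E.
Proof. by apply: sumr_ge0 => r _; exact: probR_ge0. Qed.

Lemma PrEv_disjoint_le E1 E2 E :
  (forall r, injective r -> E1 r -> ~~ E2 r) -> (forall r, E1 r || E2 r -> E r) ->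
  PrEv u p E1 + PrEv u p E2 <= PrEv u p E.
Proof.
move=> disj sub; rewrite /PrEv !(big_mkcond (fun r => injectiveb r && _)) -big_split /=.
apply: ler_sum => r _; case: (boolP (injectiveb r)) => [/injectiveP r_inj | _] /=; last first.
  by rewrite addr0.
case: (boolP (E1 r)) => [E1r | _].
  have -> : E r by apply: sub; rewrite E1r.
  by rewrite (negbTE (disj r r_inj E1r)) addr0.
rewrite add0r; case: ifP => E2r.
  by have -> : E r by apply: sub; rewrite E2r orbT.
by case: ifP => _ //; exact: probR_ge0.
Qed.

Lemma PrEv_le_inj (f : ranking n k -> ranking n k) E1 E2 : injective f ->
  (forall r, injectiveb r && E1 r -> injectiveb (f r) && E2 (f r)) ->
  (forall r, injectiveb r && E1 r -> probR u p r <= probR u p (f r)) ->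
  PrEv u p E1 <= PrEv u p E2.
Proof.
move=> f_inj fE fP; rewrite /PrEv [in leRHS](reindex_inj f_inj) big_mkcond [in leRHS]big_mkcond /=.
apply: ler_sum => r _; case: ifP => E1r; first by rewrite fE // fP.
by case: ifP => _ //; exact: probR_ge0.
Qed.

Lemma probR_swap_le r (i j : 'I_n) : injective r -> ranked_above i j r -> u i <= u j ->
  probR u p r <= probR u p (swap_items i j r).
Proof.
move=> r_inj /existsP[s /existsP[s' /and3P[lt_ss' /eqP ri /eqP rj]]] le_u.
apply: ler_sum => C _; apply: ler_wpM2l; first exact: probC_cond_ge0.
exact: PL_swap_le lt_ss' ri rj le_u.
Qed.

Lemma PrEv_above_le (i j : 'I_n) : u i <= u j ->
  PrEv u p (fun r => ranked_above i j r && both_in i j r) <=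
  PrEv u p (fun r => ranked_above j i r && both_in i j r).
Proof.
move=> le_u; apply: (PrEv_le_inj (can_inj (swap_itemsK i j))).
  move=> r /and3P[/injectiveP r_inj above_ij both_ij].
  apply/and3P; split; first exact/injectiveP/swap_items_inj.
  - exact: ranked_above_swap.
  - exact: both_in_swap.
by move=> r /andP[/injectiveP r_inj /andP[above_ij _]]; exact: probR_swap_le.
Qed.

End Probability.

Theorem lemma2 (R : realType) (n k : nat) (u p : 'I_n -> R) (i j : 'I_n) :
  (k <= n)%N ->
  (forall h, 0 < p h <= 1) ->
  prob_above_given_both k u p i j > 1 / 2 ->
  u i > u j.
Proof.
move=> _ p_range; apply: contraTT; rewrite -!leNgt => le_u.
have p01 h : 0 <= p h <= 1 by have /andP[/ltW -> ->] := p_range h.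
apply: (ratio_le_half (PrEv_ge0 u p01 _) (PrEv_above_le k p01 le_u)).
apply: (PrEv_disjoint_le u p01) => [r r_inj /andP[above_ij _] | r /orP[] /andP[] //].
by rewrite negb_and (ranked_above_asym r_inj above_ij).
Qed.
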